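(* Let $X$ be a nonempty metric space such that (1) every closed bounded ball in $X$ is compact, and (2) there exist $x_0\in X$ and $r>0$ such that for every $y\in X$ and every $\lambda>1$ there is a $\lambda$-bi-Lipschitz auto-homeomorphism $f$ of $X$ with $d(f(y),x_0)<r$. Then $X$ is almost-isometry unique.
   Context: For $\lambda>1$, an injection $f$ between metric spaces is $\lambda$-bi-Lipschitz if for all distinct $a,b$ in its domain, $d(f(a),f(b))<\lambda d(a,b)$ and $d(a,b)<\lambda d(f(a),f(b))$. Two metric spaces $X,Y$ are almost isometric if for every $\lambda>1$ there is a $\lambda$-bi-Lipschitz bijection (homeomorphism) from $X$ onto $Y$. A metric space $X$ is almost-isometry unique if every metric space almost isometric to $X$ is isometric to $X$. *)

From Stdlib Require Import Reals List.
Open Scope R_scope.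

Record MetricSpace := {
  carrier :> Type;
  mdist : carrier -> carrier -> R;
  dist_nonneg : forall x y, 0 <= mdist x y;
  dist_eq0 : forall x y, mdist x y = 0 <-> x = y;
  dist_sym : forall x y, mdist x y = mdist y x;
  dist_tri : forall x y z, mdist x z <= mdist x y + mdist y z
}.
Arguments mdist {m} _ _.

Definition is_open {X : MetricSpace} (U : X -> Prop) : Prop :=
  forall x, U x -> exists e, 0 < e /\ forall y, mdist x y < e -> U y.

Definition is_compact {X : MetricSpace} (K : X -> Prop) : Prop :=
  forall (I : Type) (U : I -> X -> Prop),
    (forall i, is_open (U i)) ->
    (forall x, K x -> exists i, U i x) ->
    exists l : list I, forall x, K x -> exists i, In i l /\ U i x.

Definition closed_ball {X : MetricSpace} (x : X) (r : R) : X -> Prop :=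
  fun y => mdist x y <= r.

Definition bijective {A B : Type} (f : A -> B) : Prop :=
  exists g : B -> A, (forall a, g (f a) = a) /\ (forall b, f (g b) = b).

Definition bi_lipschitz {X Y : MetricSpace} (lam : R) (f : X -> Y) : Prop :=
  (forall a b, f a = f b -> a = b) /\
  forall a b : X, a <> b ->
    mdist (f a) (f b) < lam * mdist a b /\ mdist a b < lam * mdist (f a) (f b).

Definition almost_isometric (X Y : MetricSpace) : Prop :=
  forall lam, 1 < lam -> exists f : X -> Y, bijective f /\ bi_lipschitz lam f.

Definition isometric (X Y : MetricSpace) : Prop :=
  exists f : X -> Y, bijective f /\ forall a b : X, mdist (f a) (f b) = mdist a b.

Definition almost_isometry_unique (X : MetricSpace) : Prop :=
  forall Y : MetricSpace, almost_isometric X Y -> isometric X Y.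

(* Composing nearly isometric bijections
   Y -> X with self-maps of X that move the image of a base point y0 into the
   fixed ball B(x0, r) gives maps k_n : Y -> X whose distortion tends to 1 and
   which keep y0 in a bounded region. Bounded sequences in X (hence in Y)
   having cluster points, a diagonal argument over dense sequences s of X and t of Y extracts
   common cluster values c_i of k_n(t_i) and b_i of k_n^-1(s_i). Every point y
   of Y then has a point G y of X that sees the c_i as y sees the t_i, and the
   s_i as y sees the b_i; symmetrically for H : X -> Y. Density of s and t
   shows that G and H are mutually inverse and that H preserves distances. *)

From Pilot Require Import Defs.
From Stdlib Require Import Reals Lra Lia List ClassicalEpsilon Classical Cantor.
Open Scope R_scope.

(* [Reals] exports its own [dist_sym] and [dist_tri], hence the qualified names. *)
Arguments Defs.dist_nonneg {m}.
Arguments Defs.dist_eq0 {m}.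
Arguments Defs.dist_sym {m}.
Arguments Defs.dist_tri {m}.

Lemma inv_succ_pos (m : nat) : 0 < / (INR m + 1).
Proof. apply Rinv_0_lt_compat. pose proof (pos_INR m). lra. Qed.

Lemma inv_succ_antitone (m n : nat) : (m <= n)%nat -> / (INR n + 1) <= / (INR m + 1).
Proof.
  intros Hmn. apply le_INR in Hmn. pose proof (pos_INR m).
  apply Rinv_le_contravar; lra.
Qed.

Lemma inv_succ_lt (e : R) : 0 < e -> exists N : nat, / (INR N + 1) < e.
Proof.
  intros He. destruct (archimed_cor1 e He) as [N [HN HN0]]. exists N.
  apply lt_0_INR in HN0.
  apply Rle_lt_trans with (/ INR N); [apply Rlt_le, Rinv_lt_contravar|]; nra.
Qed.

Lemma eq_of_abs_le_eps (A B : R) : (forall e, 0 < e -> Rabs (A - B) <= e) -> A = B.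
Proof.
  intros H. destruct (Req_dec A B) as [|HAB]; [assumption|].
  assert (Hpos : 0 < Rabs (A - B)) by (apply Rabs_pos_lt; lra).
  specialize (H (Rabs (A - B) / 2) ltac:(lra)). lra.
Qed.

Lemma dist_self {X : MetricSpace} (x : X) : mdist x x = 0.
Proof. apply Defs.dist_eq0; reflexivity. Qed.

Lemma dist_dist_le {X : MetricSpace} (p q p' q' : X) :
  Rabs (mdist p q - mdist p' q') <= mdist p p' + mdist q q'.
Proof.
  pose proof (Defs.dist_tri p p' q). pose proof (Defs.dist_tri p' q' q).
  pose proof (Defs.dist_tri p' p q'). pose proof (Defs.dist_tri p q q').
  pose proof (Defs.dist_sym p p'). pose proof (Defs.dist_sym q q').
  unfold Rabs; destruct Rcase_abs; lra.
Qed.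

Lemma dist_limit {X : MetricSpace} (a b : X) (D : R) :
  (forall e, 0 < e -> exists p q : X,
     mdist p a < e /\ mdist q b < e /\ Rabs (mdist p q - D) <= e) ->
  mdist a b = D.
Proof.
  intros H. apply eq_of_abs_le_eps. intros e He.
  destruct (H (e / 3) ltac:(lra)) as (p & q & Hp & Hq & HD).
  pose proof (dist_dist_le a b p q) as Happrox.
  rewrite (Defs.dist_sym a p), (Defs.dist_sym b q) in Happrox.
  pose proof (Rabs_triang (mdist a b - mdist p q) (mdist p q - D)) as Htri.
  replace (mdist a b - mdist p q + (mdist p q - D)) with (mdist a b - D) in Htri by ring.
  lra.
Qed.

Lemma ball_open {X : MetricSpace} (a : X) (r : R) : is_open (fun z => mdist a z < r).
Proof.
  intros x Hx. exists (r - mdist a x). split; [lra|].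
  intros y Hy. pose proof (Defs.dist_tri a x y). lra.
Qed.

Definition dense {X : MetricSpace} (s : nat -> X) : Prop :=
  forall x e, 0 < e -> exists i, mdist x (s i) < e.

Lemma eq_of_dist_dense {X : MetricSpace} (s : nat -> X) (a x : X) :
  dense s -> (forall i, mdist a (s i) = mdist x (s i)) -> a = x.
Proof.
  intros Hs Ha. apply Defs.dist_eq0, dist_limit. intros e He.
  destruct (Hs x e He) as [i Hi].
  exists a, (s i). rewrite dist_self, (Defs.dist_sym (s i)), Rminus_0_r, Ha.
  rewrite Rabs_right by apply Rle_ge, Defs.dist_nonneg. lra.
Qed.

Lemma dist_preserved_of_dense {X Y : MetricSpace} (s : nat -> X) (b : nat -> Y)
  (h : X -> Y) :
  dense s -> (forall x i, mdist (h x) (b i) = mdist x (s i)) ->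
  forall x x', mdist (h x) (h x') = mdist x x'.
Proof.
  intros Hs Hh x x'. apply dist_limit. intros e He.
  destruct (Hs x' e He) as [i Hi].
  exists (h x), (b i). rewrite dist_self, (Defs.dist_sym (b i)), !Hh.
  pose proof (dist_dist_le x (s i) x x') as Hd. rewrite dist_self, (Defs.dist_sym (s i)) in Hd.
  lra.
Qed.

Lemma proper_separable (X : MetricSpace) (x0 : X) :
  (forall (x : X) (r : R), is_compact (closed_ball x r)) -> exists s : nat -> X, dense s.
Proof.
  intros Hc.
  assert (Hnet : forall m : nat, exists l : list X, forall x, closed_ball x0 (INR m) x ->
            exists a, In a l /\ mdist a x < / (INR m + 1)).
  { intros m. apply (Hc x0 (INR m) X (fun a z => mdist a z < / (INR m + 1))).
    - intros a. apply ball_open.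
    - intros x _. exists x. rewrite dist_self. apply inv_succ_pos. }
  destruct (choice _ Hnet) as [L HL].
  exists (fun j => nth (snd (Cantor.of_nat j)) (L (fst (Cantor.of_nat j))) x0).
  intros x e He.
  destruct (inv_succ_lt e He) as [M1 HM1].
  destruct (INR_unbounded (mdist x0 x)) as [M2 HM2].
  set (m := Nat.max M1 M2).
  destruct (HL m x) as [a [Ha Hd]].
  { apply Rlt_le, (Rlt_le_trans _ (INR M2)); [exact HM2 | apply le_INR; lia]. }
  destruct (In_nth _ _ x0 Ha) as [i [_ Hi]].
  exists (Cantor.to_nat (m, i)). rewrite Cantor.cancel_of_to; simpl. rewrite Hi, Defs.dist_sym.
  pose proof (inv_succ_antitone M1 m ltac:(lia)). lra.
Qed.

Definition bilip_le {X Y : MetricSpace} (l : R) (f : X -> Y) : Prop :=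
  forall a b, mdist (f a) (f b) <= l * mdist a b /\ mdist a b <= l * mdist (f a) (f b).

Lemma bilip_le_of_bi_lipschitz {X Y : MetricSpace} (l : R) (f : X -> Y) :
  0 < l -> bi_lipschitz l f -> bilip_le l f.
Proof.
  intros Hl [_ Hf] a b. destruct (classic (a = b)) as [<-|Hab].
  - rewrite !dist_self. lra.
  - destruct (Hf a b Hab). lra.
Qed.

Lemma bilip_le_inv {X Y : MetricSpace} (l : R) (f : X -> Y) (g : Y -> X) :
  (forall y, f (g y) = y) -> bilip_le l f -> bilip_le l g.
Proof.
  intros Hfg Hf a b. destruct (Hf (g a) (g b)) as [Hup Hlo].
  rewrite !Hfg in Hup, Hlo. split; assumption.
Qed.

Lemma bilip_le_comp {X Y Z : MetricSpace} (l1 l2 : R) (f : X -> Y) (g : Y -> Z) :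
  0 < l1 -> 0 < l2 -> bilip_le l1 f -> bilip_le l2 g ->
  bilip_le (l1 * l2) (fun x => g (f x)).
Proof.
  intros Hl1 Hl2 Hf Hg a b.
  destruct (Hf a b) as [Hf1 Hf2]. destruct (Hg (f a) (f b)) as [Hg1 Hg2].
  split.
  - apply (Rle_trans _ _ _ Hg1). rewrite (Rmult_comm l1), Rmult_assoc.
    apply Rmult_le_compat_l; lra.
  - apply (Rle_trans _ _ _ Hf2). rewrite Rmult_assoc.
    apply Rmult_le_compat_l; lra.
Qed.

Lemma bilip_le_dist_dev {X Y : MetricSpace} (l : R) (f : X -> Y) (a b : X) :
  1 <= l -> bilip_le l f ->
  Rabs (mdist (f a) (f b) - mdist a b) <= (l - 1) * mdist a b.
Proof.
  intros Hl Hf. destruct (Hf a b) as [Hup Hlo].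
  pose proof (Defs.dist_nonneg a b). pose proof (Defs.dist_nonneg (f a) (f b)).
  assert (Hlow : mdist a b - (l - 1) * mdist a b <= mdist (f a) (f b)) by nra.
  unfold Rabs; destruct Rcase_abs; lra.
Qed.

Definition lam_seq (n : nat) : R := 1 + / (INR n + 1).

Lemma lam_seq_bounds (n : nat) : 1 < lam_seq n <= 2.
Proof.
  unfold lam_seq. pose proof (inv_succ_pos n).
  pose proof (inv_succ_antitone 0 n ltac:(lia)) as H1.
  rewrite Rplus_0_l, Rinv_1 in H1. lra.
Qed.

Lemma lam_seq_small (C e : R) : 0 < e ->
  exists N, forall n, (N <= n)%nat -> (lam_seq n - 1) * C <= e.
Proof.
  intros He. pose proof (Rabs_pos C).
  destruct (inv_succ_lt (e / (Rabs C + 1))) as [N HN].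
  { apply Rdiv_lt_0_compat; lra. }
  exists N. intros n Hn. unfold lam_seq.
  replace (1 + / (INR n + 1) - 1) with (/ (INR n + 1)) by ring.
  pose proof (inv_succ_antitone N n Hn). pose proof (inv_succ_pos n).
  pose proof (Rle_abs C).
  assert (Hbound : / (INR n + 1) * (Rabs C + 1) <= e).
  { apply Rmult_le_reg_r with (/ (Rabs C + 1)); [apply Rinv_0_lt_compat; lra|].
    rewrite Rmult_assoc, Rinv_r by lra. unfold Rdiv in HN. lra. }
  nra.
Qed.

(** * Cluster values along frequent precisions *)

(* [P e n] reads "stage n achieves precision e". Refining [P] by a further
   condition plays the role of passing to a subsequence. *)
Definition frequently (P : R -> nat -> Prop) : Prop :=
  forall e, 0 < e -> forall N, exists n, (N <= n)%nat /\ P e n.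

Definition eps_monotone (P : R -> nat -> Prop) : Prop :=
  forall e e' n, P e n -> e <= e' -> P e' n.

Lemma frequently_impl (P Q : R -> nat -> Prop) :
  (forall e n, P e n -> Q e n) -> frequently P -> frequently Q.
Proof.
  intros HPQ HP e He N. destruct (HP e He N) as [n [Hn HPn]]. eauto.
Qed.

Definition frequently_proper (X : MetricSpace) : Prop :=
  forall (F : R -> nat -> Prop) (u : nat -> X) (z : X) (R0 : R),
    eps_monotone F -> frequently F -> (forall n, mdist (u n) z <= R0) ->
    exists a, frequently (fun e n => F e n /\ mdist (u n) a < e).

Lemma compact_frequently_cluster {X : MetricSpace} (K : X -> Prop)
  (F : R -> nat -> Prop) (u : nat -> X) :
  is_compact K -> (forall n, K (u n)) -> eps_monotone F -> frequently F ->
  exists a, frequently (fun e n => F e n /\ mdist (u n) a < e).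
Proof.
  intros HK Hu HFm HF. apply NNPP; intros Hno.
  (* A single index [m] bounds both the precision and the starting stage. *)
  assert (Hfar : forall a, exists m : nat, forall n, (m <= n)%nat ->
            F (/ (INR m + 1)) n -> / (INR m + 1) <= mdist (u n) a).
  { intros a. apply NNPP; intros Hnear. apply Hno. exists a. intros e He N.
    destruct (inv_succ_lt e He) as [M HM].
    apply not_ex_all_not with (n := Nat.max N M) in Hnear.
    apply not_all_ex_not in Hnear as [n Hn].
    apply imply_to_and in Hn as [Hle Hn]. apply imply_to_and in Hn as [HFn Hd].
    pose proof (inv_succ_antitone M (Nat.max N M) ltac:(lia)).
    exists n. split; [lia|]. split; [apply (HFm _ _ _ HFn); lra | lra]. }
  destruct (choice _ Hfar) as [m Hm].
  destruct (HK X (fun a z => mdist a z < / (INR (m a) + 1))) as [l Hl].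
  - intros a. apply ball_open.
  - intros x _. exists x. rewrite dist_self. apply inv_succ_pos.
  - set (M := list_max (map m l)).
    destruct (HF _ (inv_succ_pos M) M) as [n [Hn HFn]].
    destruct (Hl (u n) (Hu n)) as [a [Ha Hd]].
    assert (HmM : (m a <= M)%nat).
    { apply (proj1 (Forall_forall _ _) (proj1 (list_max_le (map m l) M) (le_n M))).
      apply in_map, Ha. }
    pose proof (inv_succ_antitone (m a) M HmM).
    specialize (Hm a n ltac:(lia) (HFm _ (/ (INR (m a) + 1)) _ HFn ltac:(lra))).
    rewrite Defs.dist_sym in Hd. lra.
Qed.

Lemma proper_frequently_proper (X : MetricSpace) :
  (forall (x : X) (r : R), is_compact (closed_ball x r)) -> frequently_proper X.
Proof.
  intros Hc F u z R0 HFm HF Hu. apply (compact_frequently_cluster (closed_ball z R0)); auto.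
  intros n. unfold closed_ball. rewrite Defs.dist_sym. apply Hu.
Qed.

Lemma frequently_proper_bilip {X Y : MetricSpace} (l : R) (f : Y -> X) (g : X -> Y) :
  1 <= l -> (forall y, g (f y) = y) -> bilip_le l f -> bilip_le l g ->
  frequently_proper X -> frequently_proper Y.
Proof.
  intros Hl Hgf Hf Hg HX F u z R0 HFm HF Hu.
  destruct (HX F (fun n => f (u n)) (f z) (l * R0) HFm HF) as [a Ha].
  { intros n. apply (Rle_trans _ _ _ (proj1 (Hf (u n) z))).
    apply Rmult_le_compat_l; [lra | apply Hu]. }
  exists (g a). intros e He N.
  destruct (Ha (e / l) ltac:(apply Rdiv_lt_0_compat; lra) N) as [n [Hn [HFn Hd]]].
  assert (Hel : e / l <= e).
  { apply Rmult_le_reg_r with l; [lra|]. unfold Rdiv.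
    rewrite Rmult_assoc, Rinv_l by lra. nra. }
  exists n. split; [exact Hn|]. split; [exact (HFm _ _ _ HFn Hel)|].
  rewrite <- (Hgf (u n)).
  apply (Rle_lt_trans _ _ _ (proj1 (Hg (f (u n)) a))).
  apply Rmult_lt_compat_l with (r := l) in Hd; [|lra].
  unfold Rdiv in Hd. rewrite (Rmult_comm e), <- Rmult_assoc, Rinv_r, Rmult_1_l in Hd; lra.
Qed.

(** * Diagonal extraction *)

Section Diagonal.

Variables (A : Type) (a0 : A) (Close : nat -> A -> R -> nat -> Prop).
Hypothesis Close_mono : forall i a, eps_monotone (Close i a).
Hypothesis Close_refine : forall i F, eps_monotone F -> frequently F ->
  exists a, frequently (fun e n => F e n /\ Close i a e n).

Definition next_cluster (F : R -> nat -> Prop) (i : nat) : A :=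
  epsilon (inhabits a0) (fun a => frequently (fun e n => F e n /\ Close i a e n)).

Fixpoint stage (j : nat) : R -> nat -> Prop :=
  match j with
  | O => fun _ _ => True
  | S j => fun e n => stage j e n /\ Close j (next_cluster (stage j) j) e n
  end.

Definition diag (i : nat) : A := next_cluster (stage i) i.

Lemma stage_mono (j : nat) : eps_monotone (stage j).
Proof.
  induction j as [|j IH]; intros e e' n Hn He; [exact I|].
  destruct Hn as [Hj HC]. split; [exact (IH _ _ _ Hj He) | exact (Close_mono _ _ _ _ _ HC He)].
Qed.

Lemma stage_frequently (j : nat) : frequently (stage j).
Proof.
  induction j as [|j IH].
  - intros e _ N. exists N. split; [lia | exact I].
  - apply (epsilon_spec (inhabits a0) (fun a => frequently (fun e n => stage j e n /\ Close j a e n))).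
    exact (Close_refine j _ (stage_mono j) IH).
Qed.

Lemma diag_frequently (j : nat) :
  frequently (fun e n => forall i, (i < j)%nat -> Close i (diag i) e n).
Proof.
  apply (frequently_impl (stage j)); [|apply stage_frequently].
  induction j as [|j IH]; intros e n Hn i Hi; [lia|].
  destruct Hn as [Hj HC]. destruct (Nat.eq_dec i j) as [->|Hij]; [exact HC|].
  apply IH; [exact Hj | lia].
Qed.

End Diagonal.

(** * The limit maps *)

Section LimitMap.

Variables (X Y : MetricSpace) (k : nat -> Y -> X) (ki : nat -> X -> Y).
Hypothesis k_ki : forall n x, k n (ki n x) = x.
Hypothesis k_bilip : forall n, bilip_le (lam_seq n) (k n).
Hypothesis X_proper : frequently_proper X.
Hypothesis k_orbit_bounded : forall y, exists x R0, forall n, mdist (k n y) x <= R0.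
Variables (t : nat -> Y) (s : nat -> X) (c : nat -> X) (b : nat -> Y).
Hypothesis converge : forall j, frequently (fun e n => forall i, (i < j)%nat ->
  mdist (k n (t i)) (c i) < e /\ mdist (ki n (s i)) (b i) < e).

Lemma k_dist_dev (n : nat) (y y' : Y) :
  Rabs (mdist (k n y) (k n y') - mdist y y') <= (lam_seq n - 1) * mdist y y'.
Proof. apply bilip_le_dist_dev; [apply Rlt_le, (lam_seq_bounds _) | apply k_bilip]. Qed.

Lemma limit_point_prefix (j : nat) (y : Y) : exists a, forall l, (l < j)%nat ->
  mdist a (c l) = mdist y (t l) /\ mdist a (s l) = mdist y (b l).
Proof.
  destruct (k_orbit_bounded y) as [x [R0 HR0]].
  assert (Hmono : eps_monotone (fun e n => forall i, (i < j)%nat ->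
            mdist (k n (t i)) (c i) < e /\ mdist (ki n (s i)) (b i) < e)).
  { intros e e' n Hn He i Hi. destruct (Hn i Hi). split; lra. }
  destruct (X_proper _ (fun n => k n y) x R0 Hmono (converge j) HR0) as [a Ha].
  exists a. intros l Hl. split; apply dist_limit; intros e He.
  - destruct (lam_seq_small (mdist y (t l)) e He) as [N HN].
    destruct (Ha e He N) as [n [Hn [Hc Hy]]]. destruct (Hc l Hl) as [Ht _].
    exists (k n y), (k n (t l)). split; [exact Hy|]. split; [exact Ht|].
    eapply Rle_trans; [apply k_dist_dev | exact (HN n Hn)].
  - destruct (lam_seq_small (mdist y (b l) + e) (e / 2) ltac:(lra)) as [N HN].
    destruct (Ha (e / 2) ltac:(lra) N) as [n [Hn [Hc Hy]]]. destruct (Hc l Hl) as [_ Hs].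
    exists (k n y), (s l). rewrite dist_self. split; [lra|]. split; [exact He|].
    (* [s l] is the image of [ki n (s l)], which lies within [e/2] of [b l]. *)
    rewrite <- (k_ki n (s l)) at 1.
    pose proof (k_dist_dev n y (ki n (s l))) as Hdev.
    pose proof (dist_dist_le y (ki n (s l)) y (b l)) as Hb. rewrite dist_self in Hb.
    assert (Hgrow : (lam_seq n - 1) * mdist y (ki n (s l)) <= (lam_seq n - 1) * (mdist y (b l) + e)).
    { apply Rmult_le_compat_l; [pose proof (lam_seq_bounds n); lra|].
      pose proof (Rle_abs (mdist y (ki n (s l)) - mdist y (b l))). lra. }
    specialize (HN n Hn).
    pose proof (Rabs_triang (mdist (k n y) (k n (ki n (s l))) - mdist y (ki n (s l)))
                            (mdist y (ki n (s l)) - mdist y (b l))) as Htri.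
    replace (mdist (k n y) (k n (ki n (s l))) - mdist y (ki n (s l)) +
             (mdist y (ki n (s l)) - mdist y (b l)))
      with (mdist (k n y) (k n (ki n (s l))) - mdist y (b l)) in Htri by ring.
    lra.
Qed.

Lemma limit_point (y : Y) : exists a, forall l,
  mdist a (c l) = mdist y (t l) /\ mdist a (s l) = mdist y (b l).
Proof.
  destruct (choice _ (fun j => limit_point_prefix j y)) as [aj Haj].
  destruct (X_proper (fun _ _ => True) (fun m => aj (S m)) (c 0%nat) (mdist y (t 0%nat)))
    as [a Ha].
  - intros e e' n _ _. exact I.
  - intros e _ N. exists N. split; [lia | exact I].
  - intros m. rewrite (proj1 (Haj (S m) 0%nat ltac:(lia))). apply Rle_refl.
  - exists a. intros l.
    split; apply dist_limit; intros e He; destruct (Ha e He l) as [m [Hm [_ Hd]]];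
      destruct (Haj (S m) l ltac:(lia)) as [Hc Hs].
    + exists (aj (S m)), (c l). rewrite dist_self, Hc, Rminus_diag, Rabs_R0. lra.
    + exists (aj (S m)), (s l). rewrite dist_self, Hs, Rminus_diag, Rabs_R0. lra.
Qed.

End LimitMap.

Section Isometry.

Variables (X Y : MetricSpace) (x0 : X) (y0 : Y) (r : R).
Variables (k : nat -> Y -> X) (ki : nat -> X -> Y).
Hypothesis k_ki : forall n x, k n (ki n x) = x.
Hypothesis ki_k : forall n y, ki n (k n y) = y.
Hypothesis k_bilip : forall n, bilip_le (lam_seq n) (k n).
Hypothesis ki_bilip : forall n, bilip_le (lam_seq n) (ki n).
Hypothesis k_base : forall n, mdist (k n y0) x0 < r.
Hypothesis X_proper : frequently_proper X.
Variable s : nat -> X.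
Hypothesis s_dense : dense s.

Lemma k_orbit_bounded (y : Y) : exists x R0, forall n, mdist (k n y) x <= R0.
Proof.
  exists x0, (2 * mdist y y0 + r). intros n.
  pose proof (Defs.dist_tri (k n y) (k n y0) x0). pose proof (k_base n).
  destruct (k_bilip n y y0) as [Hup _]. pose proof (lam_seq_bounds n).
  pose proof (Defs.dist_nonneg y y0). nra.
Qed.

Lemma ki_orbit_bounded (x : X) : exists y R0, forall n, mdist (ki n x) y <= R0.
Proof.
  exists y0, (2 * (mdist x x0 + r)). intros n.
  rewrite <- (ki_k n y0). destruct (ki_bilip n x (k n y0)) as [Hup _].
  pose proof (k_base n). pose proof (Defs.dist_tri x x0 (k n y0)).
  pose proof (Defs.dist_sym x0 (k n y0)). pose proof (lam_seq_bounds n).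
  pose proof (Defs.dist_nonneg x (k n y0)). nra.
Qed.

Lemma Y_proper : frequently_proper Y.
Proof.
  apply (frequently_proper_bilip (lam_seq 0) (k 0) (ki 0)); auto.
  apply Rlt_le, (lam_seq_bounds _).
Qed.

Let t (i : nat) : Y := ki 0 (s i).

Lemma t_dense : dense t.
Proof.
  intros y e He. pose proof (lam_seq_bounds 0) as Hl.
  destruct (s_dense (k 0 y) (e / lam_seq 0) ltac:(apply Rdiv_lt_0_compat; lra)) as [i Hi].
  exists i. unfold t. rewrite <- (ki_k 0 y) at 1.
  apply (Rle_lt_trans _ _ _ (proj1 (ki_bilip 0 (k 0 y) (s i)))).
  apply Rmult_lt_compat_l with (r := lam_seq 0) in Hi; [|lra].
  unfold Rdiv in Hi. rewrite (Rmult_comm e), <- Rmult_assoc, Rinv_r, Rmult_1_l in Hi; lra.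
Qed.

Let close (i : nat) (p : X * Y) (e : R) (n : nat) : Prop :=
  mdist (k n (t i)) (fst p) < e /\ mdist (ki n (s i)) (snd p) < e.

Lemma close_refine (i : nat) (F : R -> nat -> Prop) : eps_monotone F -> frequently F ->
  exists p, frequently (fun e n => F e n /\ close i p e n).
Proof.
  intros HFm HF.
  destruct (k_orbit_bounded (t i)) as [x [Rx Hx]]. destruct (ki_orbit_bounded (s i)) as [y [Ry Hy]].
  destruct (X_proper _ _ x Rx HFm HF Hx) as [a Ha].
  assert (HFm' : eps_monotone (fun e n => F e n /\ mdist (k n (t i)) a < e)).
  { intros e e' n [HFn Hd] He. split; [exact (HFm _ _ _ HFn He) | lra]. }
  destruct (Y_proper _ _ y Ry HFm' Ha Hy) as [a' Ha'].
  exists (a, a'). revert Ha'. apply frequently_impl.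
  intros e n [[HFn Hd] Hd']. repeat split; assumption.
Qed.

Theorem isometric_of_bilip_approx : isometric X Y.
Proof.
  assert (close_mono : forall i p, eps_monotone (close i p)).
  { intros i p e e' n [H1 H2] He. split; lra. }
  set (cb := diag _ (x0, y0) close).
  assert (Hconv := diag_frequently _ (x0, y0) close close_mono close_refine).
  assert (Hconv' : forall j, frequently (fun e n => forall i, (i < j)%nat ->
            mdist (ki n (s i)) (snd (cb i)) < e /\ mdist (k n (t i)) (fst (cb i)) < e)).
  { intros j. refine (frequently_impl _ _ _ (Hconv j)).
    intros e n Hn i Hi. destruct (Hn i Hi). split; assumption. }
  destruct (choice _ (limit_point X Y k ki k_ki k_bilip X_proper k_orbit_bounded t s
    (fun i => fst (cb i)) (fun i => snd (cb i)) Hconv)) as [G HG].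
  destruct (choice _ (limit_point Y X ki k ki_k ki_bilip Y_proper ki_orbit_bounded s t
    (fun i => snd (cb i)) (fun i => fst (cb i)) Hconv')) as [H HH].
  exists H. split.
  - exists G. split.
    + intros x. apply (eq_of_dist_dense s); [exact s_dense|]. intros i.
      rewrite (proj2 (HG (H x) i)). apply HH.
    + intros y. apply (eq_of_dist_dense t); [exact t_dense|]. intros i.
      rewrite (proj2 (HH (G y) i)). apply HG.
  - apply (dist_preserved_of_dense s (fun i => snd (cb i))); [exact s_dense|].
    intros x i. apply HH.
Qed.

End Isometry.

Lemma sqrt_lam_seq (n : nat) :
  1 < sqrt (lam_seq n) /\ sqrt (lam_seq n) * sqrt (lam_seq n) = lam_seq n.
Proof.
  pose proof (lam_seq_bounds n). split.
  - rewrite <- sqrt_1. apply sqrt_lt_1_alt. lra.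
  - apply sqrt_sqrt. lra.
Qed.

(* The self-maps of [X] recentre the image of [y0]; the bi-Lipschitz constants
   multiply, hence the square roots. *)
Lemma based_bilip_approx (X Y : MetricSpace) (x0 : X) (r : R) (y0 : Y) :
  almost_isometric X Y ->
  (forall (y : X) (l : R), 1 < l ->
     exists f : X -> X, bijective f /\ bi_lipschitz l f /\ mdist (f y) x0 < r) ->
  exists (k : nat -> Y -> X) (ki : nat -> X -> Y),
    (forall n x, k n (ki n x) = x) /\ (forall n y, ki n (k n y) = y) /\
    (forall n, bilip_le (lam_seq n) (k n)) /\ (forall n, bilip_le (lam_seq n) (ki n)) /\
    (forall n, mdist (k n y0) x0 < r).
Proof.
  intros HXY Hmove.
  assert (Hn : forall n, exists p : (Y -> X) * (X -> Y),
    (forall x, fst p (snd p x) = x) /\ (forall y, snd p (fst p y) = y) /\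
    bilip_le (lam_seq n) (fst p) /\ bilip_le (lam_seq n) (snd p) /\
    mdist (fst p y0) x0 < r).
  { intros n. destruct (sqrt_lam_seq n) as [Hgt1 Hsq]. rewrite <- Hsq.
    destruct (HXY _ Hgt1) as [f [[g [Hgf Hfg]] Hf]].
    destruct (Hmove (g y0) _ Hgt1) as [h [[h' [Hh'h Hhh']] [Hh Hd]]].
    apply bilip_le_of_bi_lipschitz in Hf, Hh; try lra.
    assert (Hg : bilip_le (sqrt (lam_seq n)) g) by exact (bilip_le_inv _ _ _ Hfg Hf).
    assert (Hh' : bilip_le (sqrt (lam_seq n)) h') by exact (bilip_le_inv _ _ _ Hhh' Hh).
    exists (fun y => h (g y), fun x => f (h' x)). simpl.
    repeat split; intros; try apply bilip_le_comp; try lra; auto.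
    - rewrite Hgf. apply Hhh'.
    - rewrite Hh'h. apply Hfg. }
  destruct (choice _ Hn) as [p Hp].
  exists (fun n => fst (p n)), (fun n => snd (p n)).
  repeat split; intros; apply Hp.
Qed.

Theorem theorem3p1 (X : MetricSpace) :
  inhabited X ->
  (forall (x : X) (r : R), is_compact (closed_ball x r)) ->
  (exists (x0 : X) (r : R), 0 < r /\
     forall (y : X) (lam : R), 1 < lam ->
       exists f : X -> X, bijective f /\ bi_lipschitz lam f /\ mdist (f y) x0 < r) ->
  almost_isometry_unique X.
Proof.
  intros _ Hc [x0 [r [_ Hmove]]] Y HXY.
  destruct (HXY 2 ltac:(lra)) as [f0 _].
  destruct (based_bilip_approx X Y x0 r (f0 x0) HXY Hmove)
    as (k & ki & k_ki & ki_k & k_bilip & ki_bilip & k_base).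
  destruct (proper_separable X x0 Hc) as [s s_dense].
  exact (isometric_of_bilip_approx X Y x0 (f0 x0) r k ki k_ki ki_k k_bilip ki_bilip
    k_base (proper_frequently_proper X Hc) s s_dense).
Qed.
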